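(* Let $i:A\to X$ be a smooth cofibration of Frölicher spaces. Then $i$ is initial: for every structure function $f\in\mathcal F_A$ there exists $\tilde f\in\mathcal F_X$ with $f=\tilde f\circ i$. Consequently, if $A$ is Hausdorff (i.e. $\mathcal F_A$ separates the points of $A$), then $i$ is injective, and $A$ may be regarded as a Frölicher subspace of $X$.
   Context: A Frölicher space is a triple $(X,\mathcal C_X,\mathcal F_X)$ with $\mathcal C_X\subseteq X^{\mathbb R}$, $\mathcal F_X\subseteq\mathbb R^X$, such that $\mathcal F_X=\{f\mid f\circ c\in C^\infty(\mathbb R,\mathbb R)\ \forall c\in\mathcal C_X\}$ and $\mathcal C_X=\{c\mid f\circ c\in C^\infty(\mathbb R,\mathbb R)\ \forall f\in\mathcal F_X\}$. A map $\varphi:X\to Y$ is smooth if $g\circ\varphi\in\mathcal F_X$ for all $g\in\mathcal F_Y$. Products carry the structure generated by $f\circ\pi_i$. $I$ is $[0,1]$ with the subspace structure from $\mathbb R$. For $0<\epsilon<\frac12$, a braking function $\alpha_\epsilon:\mathbb R\to\mathbb R$ is a smooth function with $\alpha_\epsilon(t)=0$ for $t\le\epsilon$, $0<\alpha_\epsilon(t)<1$ and $\alpha_\epsilon$ strictly increasing on $(\epsilon,1-\epsilon)$, and $\alpha_\epsilon(t)=1$ for $t\ge1-\epsilon$. A smooth map $i:A\to X$ is a smooth cofibration if for every Frölicher space $Z$, every smooth $f:X\to Z$ and every smooth $G:I\times A\to Z$ with $G(0,a)=f(i(a))$ for all $a\in A$, there exist $0<\epsilon<\frac12$, a braking function $\alpha_\epsilon$,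 and a smooth $F:I\times X\to Z$ with $F(0,x)=f(x)$ for all $x\in X$ and $F(t,i(a))=G(\alpha_\epsilon(t),a)$ for all $t\in I$, $a\in A$. *)

From Stdlib Require Import Reals Lra.
Open Scope R_scope.

Definition smoothR (f : R -> R) : Prop :=
  exists d : nat -> R -> R,
    (forall x, d O x = f x) /\
    (forall n x, derivable_pt_lim (d n) x (d (S n) x)).

Record Frol := {
  carrier :> Type;
  curves : (R -> carrier) -> Prop;
  funs : (carrier -> R) -> Prop;
  funs_spec : forall f, funs f <-> (forall c, curves c -> smoothR (fun t => f (c t)));
  curves_spec : forall c, curves c <-> (forall f, funs f -> smoothR (fun t => f (c t)))
}.

Definition gen_curves {T : Type} (F0 : (T -> R) -> Prop) (c : R -> T) : Prop :=
  forall f, F0 f -> smoothR (fun t => f (c t)).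
Definition gen_funs {T : Type} (F0 : (T -> R) -> Prop) (f : T -> R) : Prop :=
  forall c, gen_curves F0 c -> smoothR (fun t => f (c t)).

Lemma gen_funs_spec {T : Type} (F0 : (T -> R) -> Prop) :
  forall f, gen_funs F0 f <-> (forall c, gen_curves F0 c -> smoothR (fun t => f (c t))).
Proof. intros f; split; auto. Qed.

Lemma gen_curves_spec {T : Type} (F0 : (T -> R) -> Prop) :
  forall c, gen_curves F0 c <-> (forall f, gen_funs F0 f -> smoothR (fun t => f (c t))).
Proof.
  intros c; split.
  - intros Hc f Hf; apply Hf, Hc.
  - intros H f Hf; apply H; intros c' Hc'; apply Hc', Hf.
Qed.

Definition Frol_gen (T : Type) (F0 : (T -> R) -> Prop) : Frol :=
  {| carrier := T; curves := gen_curves F0; funs := gen_funs F0;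
     funs_spec := gen_funs_spec F0; curves_spec := gen_curves_spec F0 |}.

Definition smooth_map {X Y : Frol} (phi : X -> Y) : Prop :=
  forall g, funs Y g -> funs X (fun x => g (phi x)).

Definition Rfrol : Frol := Frol_gen R smoothR.

Definition Icar : Type := { t : R | 0 <= t <= 1 }.
Definition Ifrol : Frol :=
  Frol_gen Icar (fun g => exists f, funs Rfrol f /\ g = (fun t : Icar => f (proj1_sig t))).

Definition prod_frol (X Y : Frol) : Frol :=
  Frol_gen (carrier X * carrier Y)
    (fun h => (exists f, funs X f /\ h = (fun p => f (fst p))) \/
              (exists g, funs Y g /\ h = (fun p => g (snd p)))).

Lemma I0_proof : 0 <= 0 <= 1. Proof. lra. Qed.
Definition I0 : Ifrol := exist (fun t => 0 <= t <= 1) 0 I0_proof.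

(** clamping R into [0,1]; used to view the values of a braking function in I *)
Lemma clamp_proof (r : R) : 0 <= Rmax 0 (Rmin 1 r) <= 1.
Proof.
  unfold Rmax, Rmin; destruct (Rle_dec 1 r), (Rle_dec 0 _); lra.
Qed.
Definition Iclamp (r : R) : Ifrol := exist (fun t => 0 <= t <= 1) (Rmax 0 (Rmin 1 r)) (clamp_proof r).

Definition braking (eps : R) (alpha : R -> R) : Prop :=
  smoothR alpha /\
  (forall t, t <= eps -> alpha t = 0) /\
  (forall t, eps < t < 1 - eps -> 0 < alpha t < 1) /\
  (forall s t, eps < s -> s < t -> t < 1 - eps -> alpha s < alpha t) /\
  (forall t, 1 - eps <= t -> alpha t = 1).

Definition smooth_cofibration {A X : Frol} (i : A -> X) : Prop :=
  smooth_map i /\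
  forall (Z : Frol) (f : X -> Z) (G : prod_frol Ifrol A -> Z),
    smooth_map f -> smooth_map G ->
    (forall a : A, G (I0, a) = f (i a)) ->
    exists (eps : R) (alpha : R -> R) (F : prod_frol Ifrol X -> Z),
      0 < eps < 1/2 /\ braking eps alpha /\ smooth_map F /\
      (forall x : X, F (I0, x) = f x) /\
      (forall (t : Ifrol) (a : A), F (t, i a) = G (Iclamp (alpha (proj1_sig t)), a)).

Definition frol_hausdorff (A : Frol) : Prop :=
  forall a b : A, a <> b -> exists f, funs A f /\ f a <> f b.

(** Let [i : A -> X] be a smooth cofibration and [f] a structure function of
    [A].  We view [f] as a smooth map into the real line [Rline], whose
    structure is generated by the identity (so smooth maps into [Rline] are
    exactly structure functions).  The homotopy [G (t, a) = t * f a] starts at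
    the constant map [0 = 0 o i], so the cofibration property extends it to a
    homotopy [F] on [I x X] with [F (t, i a) = G (alpha t, a)] for a braking
    function [alpha].  Since [alpha 1 = 1], the time-one slice
    [x |-> F (1, x)] is a structure function of [X] extending [f].  If the
    structure functions of [A] separate points, extension along [i] forces
    [i] to be injective. *)

From Stdlib Require Import Reals Lra List Classical.
Open Scope R_scope.

Lemma smoothR_const (c : R) : smoothR (fun _ => c).
Proof.
  exists (fun n x => match n with O => c | _ => 0 end).
  split; [reflexivity|].
  intros [|n] x; apply derivable_pt_lim_const.
Qed.

Lemma smoothR_id : smoothR (fun x => x).
Proof.
  exists (fun n x => match n with O => x | 1%nat => 1 | _ => 0 end).
  split; [reflexivity|].
  intros [|[|n]] x.
  - apply derivable_pt_lim_id.
  - apply derivable_pt_lim_const.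
  - apply derivable_pt_lim_const.
Qed.

(** The Leibniz rule: every derivative of [u * v] is a finite sum of terms
    [c * u^(k) * v^(j)].  We represent such sums as lists of triples
    [(c, k, j)] and differentiate them formally. *)
Section Leibniz.
Variables du dv : nat -> R -> R.
Hypothesis du_deriv : forall n x, derivable_pt_lim (du n) x (du (S n) x).
Hypothesis dv_deriv : forall n x, derivable_pt_lim (dv n) x (dv (S n) x).

Fixpoint leibniz_eval (L : list (R * nat * nat)) (x : R) : R :=
  match L with
  | nil => 0
  | (c, k, j) :: L' => c * du k x * dv j x + leibniz_eval L' x
  end.

Fixpoint leibniz_deriv (L : list (R * nat * nat)) : list (R * nat * nat) :=
  match L with
  | nil => nil
  | (c, k, j) :: L' => (c, S k, j) :: (c, k, S j) :: leibniz_deriv L'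
  end.

Lemma leibniz_deriv_correct (L : list (R * nat * nat)) (x : R) :
  derivable_pt_lim (leibniz_eval L) x (leibniz_eval (leibniz_deriv L) x).
Proof.
  induction L as [|[[c k] j] L IH]; simpl.
  - apply derivable_pt_lim_const.
  - assert (term : derivable_pt_lim (fun y => c * du k y * dv j y) x
                  (c * du (S k) x * dv j x + c * du k x * dv (S j) x)).
    { replace (c * du (S k) x * dv j x + c * du k x * dv (S j) x)
        with ((0 * du k x + c * du (S k) x) * dv j x + (c * du k x) * dv (S j) x)
        by ring.
      apply (derivable_pt_lim_mult (fun y => c * du k y) (dv j)); [|apply dv_deriv].
      apply (derivable_pt_lim_mult (fun _ => c) (du k));
        [apply derivable_pt_lim_const | apply du_deriv]. }
    rewrite <- Rplus_assoc.
    exact (derivable_pt_lim_plus _ (leibniz_eval L) x _ _ term IH).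
Qed.
End Leibniz.

Lemma smoothR_mult (u v : R -> R) :
  smoothR u -> smoothR v -> smoothR (fun x => u x * v x).
Proof.
  intros [du [du0 du_deriv]] [dv [dv0 dv_deriv]].
  exists (fun n => leibniz_eval du dv (Nat.iter n leibniz_deriv ((1, 0%nat, 0%nat) :: nil))).
  split.
  - intros x; simpl; rewrite du0, dv0; ring.
  - intros n x; apply leibniz_deriv_correct; assumption.
Qed.

Lemma funs_smooth_on_curves (D : Frol) (f : D -> R) (c : R -> D) :
  funs D f -> curves D c -> smoothR (fun t => f (c t)).
Proof. intros Hf Hc; exact (proj1 (funs_spec D f) Hf c Hc). Qed.

(** Structure functions are closed under constants and products; this makes
    [(t, a) |-> t * f a] a structure function of [I x A]. *)
Lemma funs_const (D : Frol) (r : R) : funs D (fun _ => r).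
Proof. apply funs_spec; intros c _; apply smoothR_const. Qed.

Lemma funs_mult (D : Frol) (u v : D -> R) :
  funs D u -> funs D v -> funs D (fun x => u x * v x).
Proof.
  intros Hu Hv; apply funs_spec; intros c Hc.
  apply smoothR_mult; apply funs_smooth_on_curves; assumption.
Qed.

Lemma gen_funs_of_generator (T : Type) (F0 : (T -> R) -> Prop) (f : T -> R) :
  F0 f -> gen_funs F0 f.
Proof. intros Hf c Hc; exact (Hc f Hf). Qed.

Lemma smooth_into_gen (D : Frol) (T : Type) (F0 : (T -> R) -> Prop) (G : D -> T) :
  (forall g, F0 g -> funs D (fun x => g (G x))) ->
  @smooth_map D (Frol_gen T F0) G.
Proof.
  intros H g Hg; apply funs_spec; intros c Hc.
  apply Hg; intros h Hh; exact (funs_smooth_on_curves _ _ _ (H h Hh) Hc).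
Qed.

Lemma funs_prod_fst (X Y : Frol) (f : X -> R) :
  funs X f -> funs (prod_frol X Y) (fun p => f (fst p)).
Proof. intros Hf; apply gen_funs_of_generator; left; exists f; auto. Qed.

Lemma funs_prod_snd (X Y : Frol) (g : Y -> R) :
  funs Y g -> funs (prod_frol X Y) (fun p => g (snd p)).
Proof. intros Hg; apply gen_funs_of_generator; right; exists g; auto. Qed.

Lemma funs_prod_slice (Y X : Frol) (y : Y) (h : prod_frol Y X -> R) :
  funs (prod_frol Y X) h -> funs X (fun x => h (y, x)).
Proof.
  intros Hh; apply funs_spec; intros c Hc.
  apply (funs_smooth_on_curves (prod_frol Y X) h (fun s => (y, c s)) Hh).
  intros k [[f [_ ->]] | [g [Hg ->]]]; simpl.
  - apply smoothR_const.
  - exact (proj1 (curves_spec X c) Hc g Hg).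
Qed.

Lemma funs_I_coordinate : funs Ifrol (fun t : Icar => proj1_sig t).
Proof.
  apply gen_funs_of_generator; exists (fun r => r); split; [|reflexivity].
  apply gen_funs_of_generator; exact smoothR_id.
Qed.

Lemma I1_proof : 0 <= 1 <= 1. Proof. lra. Qed.
Definition I1 : Ifrol := exist (fun t => 0 <= t <= 1) 1 I1_proof.

Lemma braking_end (eps : R) (alpha : R -> R) :
  0 < eps -> braking eps alpha -> proj1_sig (Iclamp (alpha 1)) = 1.
Proof.
  intros Heps (_ & _ & _ & _ & alpha_top); simpl.
  rewrite alpha_top by lra.
  unfold Rmin, Rmax; destruct (Rle_dec 1 1); [|lra].
  destruct (Rle_dec 0 1); lra.
Qed.

(** [R] with the structure generated by the identity: smooth maps into it
    are exactly the structure functions. *)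
Definition Rline : Frol := Frol_gen R (fun g => g = (fun z => z)).

Lemma smooth_into_Rline (D : Frol) (h : D -> R) :
  funs D h -> @smooth_map D Rline h.
Proof. intros Hh; apply smooth_into_gen; intros g ->; exact Hh. Qed.

Lemma funs_of_smooth_into_Rline (D : Frol) (h : D -> Rline) :
  smooth_map h -> funs D (fun x => h x : R).
Proof. intros Hh; apply (Hh (fun z => z)), gen_funs_of_generator; reflexivity. Qed.

Lemma cofibration_extends (A X : Frol) (i : A -> X) (f : A -> R) :
  smooth_cofibration i -> funs A f ->
  exists ft, funs X ft /\ forall a : A, f a = ft (i a).
Proof.
  intros [_ cofib] Hf.
  set (G := fun p : prod_frol Ifrol A => (proj1_sig (fst p) * f (snd p) : Rline)).
  set (zero := fun _ : X => (0 : Rline)).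
  destruct (cofib Rline zero G) as (eps & alpha & F & Heps & Halpha & HF & _ & HFi).
  - exact (smooth_into_Rline X zero (funs_const X 0)).
  - apply (smooth_into_Rline (prod_frol Ifrol A) G), funs_mult.
    + exact (funs_prod_fst Ifrol A _ funs_I_coordinate).
    + exact (funs_prod_snd Ifrol A f Hf).
  - intros a; unfold G, zero; simpl; ring.
  - exists (fun x => (F (I1, x) : R)); split.
    + exact (funs_prod_slice Ifrol X I1 _ (funs_of_smooth_into_Rline _ F HF)).
    + intros a; rewrite (HFi I1 a); unfold G; simpl fst; simpl snd.
      rewrite (braking_end eps alpha) by (tauto || lra); ring.
Qed.

Lemma initial_hausdorff_injective (A X : Frol) (i : A -> X) :
  (forall f, funs A f -> exists ft, funs X ft /\ forall a : A, f a = ft (i a)) ->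
  frol_hausdorff A -> forall a b : A, i a = i b -> a = b.
Proof.
  intros extend separated a b Hab.
  destruct (classic (a = b)) as [|Hne]; [assumption|exfalso].
  destruct (separated a b Hne) as [f [Hf Hfab]].
  destruct (extend f Hf) as [ft [_ Hft]].
  apply Hfab; rewrite !Hft, Hab; reflexivity.
Qed.

Theorem mainTheorem6 (A X : Frol) (i : A -> X) :
  smooth_cofibration i ->
  (forall f, funs A f -> exists ft, funs X ft /\ forall a : A, f a = ft (i a)) /\
  (frol_hausdorff A -> forall a b : A, i a = i b -> a = b).
Proof.
  intros cofib.
  pose proof (fun f => cofibration_extends A X i f cofib) as initial.
  split; [exact initial | exact (initial_hausdorff_injective A X i initial)].
Qed.
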